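(* Let $\mathbf{L}=(L,\le)$ be a nontrivial finite join-semilattice with greatest element $1$ satisfying property $( * )$, and let $(R,\vee,\circ)$ be a subsemiring of $(\mathrm{JM}_1(\mathbf{L}),\vee,\circ)$ such that $f_{a,b}\in R$ for all $a\in L\setminus\{1\}$, $b\in L$, and every $f\in R$ satisfies $f_{a,b}\le f$ for some $a\in L\setminus\{1\}$, $b\in L$. Then $(R,\vee)$ has a neutral element if and only if $1$ is join-irreducible and $\mathbf{L}$ is a lattice. If this neutral element exists, it is neither left nor right absorbing in $(R,\vee,\circ)$.
   Context: $\mathrm{JM}_1(\mathbf{L})$ is the set of maps $f:L\to L$ preserving binary joins with $f(1)=1$, a semiring under pointwise join and composition, ordered pointwise. $f_{a,b}(x)=b$ if $x\le a$ and $1$ otherwise. $\mathbf{L}$ satisfies $( * )$ if there exists $u\in L$ with $1\ne u\vee x$ for all $x\in L\setminus\{1\}$. $1$ is join-irreducible if $1\ne a\vee b$ for all $a,b\in L\setminus\{1\}$. A finite join-semilattice is a lattice iff it has a least element. An element $r$ is right absorbing if $s\circ r=r$ for all $s$, left absorbing if $r\circ s=r$ for all $s$. *)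

From mathcomp Require Import all_boot all_order.
Set Implicit Arguments. Unset Strict Implicit. Unset Printing Implicit Defensive.
Import Order.Theory.
Local Open Scope order_scope.

Section Defs.
Context {d : Order.disp_t} (L : finTJoinSemilatticeType d).

Definition JM1 (f : {ffun L -> L}) : Prop :=
  (forall x y : L, f (x `|` y) = f x `|` f y) /\ f \top = \top.

Definition fjoin (f g : {ffun L -> L}) : {ffun L -> L} := [ffun x => f x `|` g x].
Definition fcomp (f g : {ffun L -> L}) : {ffun L -> L} := [ffun x => f (g x)].

Definition fle (f g : {ffun L -> L}) : Prop := forall x : L, f x <= g x.

Definition fab (a b : L) : {ffun L -> L} := [ffun x => if x <= a then b else \top].

Definition is_subsemiring (R : {set {ffun L -> L}}) : Prop :=
  (exists f, f \in R) /\
  (forall f, f \in R -> JM1 f) /\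
  (forall f g, f \in R -> g \in R -> fjoin f g \in R) /\
  (forall f g, f \in R -> g \in R -> fcomp f g \in R).

Definition star_prop : Prop :=
  exists u : L, forall x : L, x != \top -> u `|` x != \top.

Definition top_join_irreducible : Prop :=
  forall a b : L, a != \top -> b != \top -> a `|` b != \top.

Definition is_lattice : Prop :=
  forall x y : L, exists m : L,
    [/\ m <= x, m <= y & forall z : L, z <= x -> z <= y -> z <= m].

Definition join_neutral (R : {set {ffun L -> L}}) (e : {ffun L -> L}) : Prop :=
  e \in R /\ forall f, f \in R -> fjoin e f = f /\ fjoin f e = f.

Definition right_absorbing (R : {set {ffun L -> L}}) (r : {ffun L -> L}) : Prop :=
  forall s, s \in R -> fcomp s r = r.
Definition left_absorbing (R : {set {ffun L -> L}}) (r : {ffun L -> L}) : Prop :=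
  forall s, s \in R -> fcomp r s = r.
End Defs.

(* A join-neutral element [e] of [R] lies below every [f_{x,b}]; for [x <> 1] this forces
   [e x] to be a least element of [L], while [e 1 = 1].  So [L] has a bottom (hence is a
   lattice, being finite), and [1 = e (a \/ b) = e a \/ e b] is impossible for [a, b <> 1].
   Conversely, with a bottom [0] and [1] join-irreducible, the join [c] of all elements
   other than [1] is not [1], and [f_{c,0}] lies below every element of [R].  Finally the
   constant map [f_{a,1}] is in [R] and [e] is not constant, so [e] absorbs on neither side. *)
From mathcomp Require Import all_boot all_order.
Import Order.Theory.
Local Open Scope order_scope.

Section FiniteJoinSemilattice.
Context {d : Order.disp_t} {L : finTJoinSemilatticeType d}.

Lemma join_closed_has_max {P : pred L} {z : L} :
  P z -> (forall x y, P x -> P y -> P (x `|` y)) ->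
  exists2 m, P m & forall w, P w -> w <= m.
Proof.
move=> Pz PU.
suff [m Pm mP] : exists2 m, P m & forall w, w \in enum L -> P w -> w <= m.
  by exists m => // w; apply: mP; rewrite mem_enum.
elim: (enum L) => [|w s [m Pm mP]]; first by exists z.
have [Pw | nPw] := boolP (P w); last first.
  by exists m => // v; rewrite inE => /orP[/eqP-> /(negP nPw) | /mP].
exists (m `|` w); first exact: PU.
move=> v; rewrite inE => /orP[/eqP-> _ | vs Pv]; first exact: leUr.
exact: le_trans (mP v vs Pv) (leUl _ _).
Qed.

Lemma lattice_of_bottom {z : L} : (forall b, z <= b) -> is_lattice L.
Proof.
move=> zle x y.
pose lbound w := (w <= x) && (w <= y).
have lbU u v : lbound u -> lbound v -> lbound (u `|` v).
  by move=> /andP[ux uy] /andP[vx vy]; rewrite /lbound !leUx ux uy vx vy.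
have lbz : lbound z by rewrite /lbound !zle.
have [m /andP[mx my] mmax] := join_closed_has_max lbz lbU.
by exists m; split => // w wx wy; apply: mmax; rewrite /lbound wx wy.
Qed.

Lemma bottom_of_lattice : is_lattice L -> exists z : L, forall b, z <= b.
Proof.
move=> meet.
suff [z zle] : exists z : L, forall b, b \in enum L -> z <= b.
  by exists z => b; apply: zle; rewrite mem_enum.
elim: (enum L) => [|w s [m mle]]; first by exists \top.
have [m' [m'w m'm _]] := meet w m.
exists m' => v; rewrite inE => /orP[/eqP-> // | vs].
exact: le_trans m'm (mle v vs).
Qed.

Lemma coatom_of_top_join_irreducible {a : L} :
  a != \top -> top_join_irreducible L ->
  exists2 c : L, c != \top & forall w, w != \top -> w <= c.
Proof. exact: (join_closed_has_max (P := fun w => w != \top)). Qed.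

End FiniteJoinSemilattice.

Section JoinNeutral.
Context {d : Order.disp_t} {L : finTJoinSemilatticeType d} {R : {set {ffun L -> L}}}.
Hypothesis R_JM1 : forall {f}, f \in R -> JM1 f.
Hypothesis fab_in_R : forall a b : L, a != \top -> fab a b \in R.

Lemma fab_le (a b x : L) : x <= a -> fab a b x = b.
Proof. by rewrite ffunE => ->. Qed.

Lemma fle_join_neutral {e f : {ffun L -> L}} : join_neutral R e -> f \in R -> fle e f.
Proof.
move=> [_ eneutral] fR x; have [/ffunP/(_ x) <- _] := eneutral f fR.
by rewrite ffunE leUl.
Qed.

Lemma join_neutral_of_fle (e : {ffun L -> L}) :
  e \in R -> (forall f, f \in R -> fle e f) -> join_neutral R e.
Proof.
move=> eR ele; split=> // f fR.
by split; apply/ffunP => x; rewrite ffunE; [apply: join_r | apply: join_l]; apply: ele.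
Qed.

Lemma join_neutral_top {e : {ffun L -> L}} : join_neutral R e -> e \top = \top.
Proof. by case=> /R_JM1[]. Qed.

Lemma join_neutral_bottom {e : {ffun L -> L}} {x : L} (b : L) :
  join_neutral R e -> x != \top -> e x <= b.
Proof.
move=> ne x_top; have := fle_join_neutral ne (fab_in_R x b x_top) x.
by rewrite fab_le.
Qed.

Lemma join_neutral_below_top {e : {ffun L -> L}} {x a : L} :
  join_neutral R e -> a != \top -> x != \top -> e x != \top.
Proof.
move=> ne a_top x_top; apply: contraNneq a_top => ex_top.
by rewrite eq_le lex1 -ex_top join_neutral_bottom.
Qed.

Lemma join_neutral_top_join_irreducible {e : {ffun L -> L}} {a : L} :
  join_neutral R e -> a != \top -> top_join_irreducible L.
Proof.
move=> ne a_top x y x_top y_top; apply: contra_neq (join_neutral_below_top ne a_top x_top).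
move=> xy_top; have [eU _] := R_JM1 ne.1.
rewrite -(join_neutral_top ne) -xy_top eU; apply/esym/join_l.
exact: join_neutral_bottom.
Qed.

Lemma join_neutral_lattice {e : {ffun L -> L}} {a : L} :
  join_neutral R e -> a != \top -> is_lattice L.
Proof. by move=> ne a_top; apply: lattice_of_bottom (fun b => join_neutral_bottom b ne a_top). Qed.

Lemma fab_coatom_join_neutral (c z : L) :
  c != \top -> (forall w, w != \top -> w <= c) -> (forall b, z <= b) ->
  join_neutral R (fab c z).
Proof.
move=> c_top below_c zle; apply: join_neutral_of_fle; first exact: fab_in_R.
move=> f fR x; have [x_top | /below_c xc] := eqVneq x \top; last by rewrite fab_le.
by rewrite x_top; have [_ ->] := R_JM1 fR; apply: lex1.
Qed.

Lemma join_neutral_not_absorbing {e : {ffun L -> L}} {a : L} :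
  join_neutral R e -> a != \top -> ~ left_absorbing R e /\ ~ right_absorbing R e.
Proof.
move=> ne a_top.
have topR : fab a \top \in R by apply: fab_in_R.
have fab_top x : fab a \top x = \top by rewrite ffunE if_same.
have ea_top := join_neutral_below_top ne a_top a_top.
split=> absorbs; move: ea_top; have /ffunP/(_ a) := absorbs _ topR.
  by rewrite ffunE fab_top (join_neutral_top ne) => <-; rewrite eqxx.
by rewrite ffunE fab_top => <-; rewrite eqxx.
Qed.

End JoinNeutral.

Theorem proposition7p3 (d : Order.disp_t) (L : finTJoinSemilatticeType d)
    (R : {set {ffun L -> L}}) :
  (exists x : L, x != \top) ->
  star_prop L ->
  is_subsemiring R ->
  (forall a b : L, a != \top -> fab a b \in R) ->
  (forall f, f \in R -> exists a b : L, a != \top /\ fle (fab a b) f) ->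
  ((exists e, join_neutral R e) <-> (top_join_irreducible L /\ is_lattice L)) /\
  (forall e, join_neutral R e -> ~ left_absorbing R e /\ ~ right_absorbing R e).
Proof.
move=> [a a_top] _ [_ [R_JM1 _]] fab_in_R _.
split; last by move=> e ne; exact: (join_neutral_not_absorbing R_JM1 fab_in_R ne a_top).
split=> [[e ne] | [irr lat]].
  split; first exact: (join_neutral_top_join_irreducible R_JM1 fab_in_R ne a_top).
  exact: (join_neutral_lattice fab_in_R ne a_top).
have [z zle] := bottom_of_lattice lat.
have [c c_top below_c] := coatom_of_top_join_irreducible a_top irr.
by exists (fab c z); apply: fab_coatom_join_neutral.
Qed.
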